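(* Let $a_1,\ldots,a_{n+1}>0$, let $E=E(a_1,\ldots,a_n)\subset\mathbb{C}^n$, let $u=\sum_{j=1}^n\pi|z_j|^2/a_j$ on $\mathbb{C}^n$, and for $0<\varepsilon<1<\beta$ define $H_{\varepsilon,\beta}\colon E\to\mathbb{R}$ by $H_{\varepsilon,\beta}=\min\{a_{n+1}(\varepsilon+\beta u),\,a_{n+1}(1-u)\}$ and \[E^\circ_{H_{\varepsilon,\beta}}=\{(w,z)\in E\times\mathbb{C}\mid \pi|z|^2<H_{\varepsilon,\beta}(w)\}\subset\mathbb{C}^{n+1}.\] Then for any $0<\varepsilon<1<\beta$, $(E^\circ_{H_{\varepsilon,\beta}},\hat\lambda_0)$ is an open Liouville domain.
   Context: $E(a_1,\ldots,a_n)=\{(z_1,\ldots,z_n)\in\mathbb{C}^n\mid\sum_j\pi|z_j|^2/a_j\leq1\}$. $\hat\lambda_0=\frac12\sum_{j=1}^{n+1}(x_jdy_j-y_jdx_j)$ is the standard primitive on $\mathbb{C}^{n+1}$, $z_j=x_j+iy_j$. An open Liouville domain is a manifold without boundary $U$ with a 1-form $\lambda$ such that $d\lambda$ is symplectic, the flow $\mathcal{L}^t$ of the Liouville vector field $\mathcal{L}$ (defined by $d\lambda(\mathcal{L},\cdot)=\lambda$) exists on $U$ for all $t\leq0$, and $\mathcal{L}^t(U)$ has compact closure in $U$ for all $t<0$. *)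

From HB Require Import structures.
From mathcomp Require Import all_boot all_order all_algebra.
From mathcomp Require Import all_classical all_reals all_analysis.
Set Implicit Arguments. Unset Strict Implicit. Unset Printing Implicit Defensive.
Import Order.TTheory GRing.Theory Num.Theory.
Import numFieldNormedType.Exports.
Local Open Scope classical_set_scope.
Local Open Scope ring_scope.

(** Exterior derivative of a 1-form [lam] (lam p : covector at p), evaluated on
    constant vector fields v, w :  d lam (v,w) = v(lam(w)) - w(lam(v)). *)
Definition dform {R : realType} {V : normedModType R} (lam : V -> V -> R)
  (p v w : V) : R :=
  'D_v (fun q => lam q w) p - 'D_w (fun q => lam q v) p.

(** Open Liouville domain: U an open subset of the (finite-dimensional) vector
    space V (hence a manifold without boundary), lam a (differentiable) 1-form on U
    with d lam symplectic (nondegenerate; closedness is automatic), the Liouville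
    vector field L (d lam (L, .) = lam) has a flow defined on U for all t <= 0,
    and for t < 0 the image L^t(U) has compact closure contained in U. *)
Definition open_liouville_domain {R : realType} {V : normedModType R}
  (U : set V) (lam : V -> V -> R) : Prop :=
  [/\ open U,
      (forall p, U p -> forall (c : R) (v w : V),
          lam p (c *: v + w) = c * lam p v + lam p w),
      (forall p, U p -> forall w, differentiable (fun q => lam q w) p),
      (forall p, U p -> forall v, (forall w, dform lam p v w = 0) -> v = 0)
    & exists L : V -> V,
        (forall p, U p -> forall w, dform lam p (L p) w = lam p w) /\
        exists phi : R -> V -> V,
          (forall p, U p -> phi 0 p = p /\
             exists2 d : R, 0 < d & forall t : R, t < d ->
               U (phi t p) /\ is_derive t (1 : R) (fun s => phi s p) (L (phi t p))) /\
          (forall t : R, t < 0 ->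
             compact (closure (phi t @` U)) /\ closure (phi t @` U) `<=` U)].

(** C^{n+1} = R^{2n+2}: a point is (x, y) with z_j = x_j + i y_j, j : 'I_n.+1;
    the last coordinate (ord_max) is the extra C factor, the first n are w in C^n. *)
Definition Cn1 (R : realType) (n : nat) :=
  ('rV[R]_(n.+1) * 'rV[R]_(n.+1))%type.

Definition sqmod {R : realType} {n : nat} (p : Cn1 R n) (j : 'I_n.+1) : R :=
  p.1 ord0 j ^+ 2 + p.2 ord0 j ^+ 2.

Definition ufun {R : realType} {n : nat} (a : 'I_n.+1 -> R) (p : Cn1 R n) : R :=
  \sum_(j < n.+1 | (j < n)%N) pi * sqmod p j / a j.

Definition Hfun {R : realType} {n : nat} (a : 'I_n.+1 -> R) (eps beta : R)
  (p : Cn1 R n) : R :=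
  Num.min (a ord_max * (eps + beta * ufun a p)) (a ord_max * (1 - ufun a p)).

(** E^o_H = {(w,z) in E x C | pi|z|^2 < H(w)}, E = E(a_1..a_n) = {u <= 1}. *)
Definition EH {R : realType} {n : nat} (a : 'I_n.+1 -> R) (eps beta : R)
  : set (Cn1 R n) :=
  [set p | ufun a p <= 1 /\ pi * sqmod p ord_max < Hfun a eps beta p].

Definition lambda0 {R : realType} {n : nat} (p v : Cn1 R n) : R :=
  2^-1 * \sum_(j < n.+1) (p.1 ord0 j * v.2 ord0 j - p.2 ord0 j * v.1 ord0 j).

From HB Require Import structures.
From mathcomp Require Import all_boot all_order all_algebra.
From mathcomp Require Import all_classical all_reals all_analysis.
From mathcomp Require Import ring lra.
Import Order.TTheory GRing.Theory Num.Theory.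
Import numFieldNormedType.Exports.
Local Open Scope classical_set_scope.
Local Open Scope ring_scope.

(* The differential of lambda0 is twice the standard symplectic form, hence
   nondegenerate (d lambda0 (v, i v) = |v|^2), and the Liouville field is the
   radial field p / 2, whose flow is p |-> e^(t/2) p.  Both inequalities cutting
   out E°_H survive replacing p by s p for 0 < s <= 1 (the constant a_(n+1) eps
   only helps), so E°_H is open and star-shaped and the backward flow stays in it.
   For s < 1, s E°_H lies in the closed set where the inequalities hold
   non-strictly with 1 replaced by s^2; that set is bounded and contained in E°_H. *)

Section derivatives.
Context {R : realType}.

Lemma is_derive_affine_line {V : normedModType R} (f : V -> R) (a v : V) (c : R) :
  (forall h : R, f (h *: v + a) = f a + h * c) -> is_derive a v f c.
Proof.
move=> f_line.
have q_cvg : (fun h : R => h^-1 *: ((f \o shift a) (h *: v) - f a)) @ 0^' --> c.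
  apply: cvg_near_cst; near=> h.
  have h_neq0 : h != 0 by near: h; exact: nbhs_dnbhs_neq.
  by rewrite /= f_line addrC addKr /GRing.scale /= mulKf.
split; [exact: cvgP q_cvg | exact: cvg_lim q_cvg].
Unshelve. all: by end_near.
Qed.

Lemma is_derive_scaler {W : normedModType R} (e : R -> R) (p : W) (t de : R) :
  is_derive t 1 e de -> is_derive t 1 (fun s => e s *: p) (de *: p).
Proof.
move=> [e_der <-].
have q_cvg : (fun h : R => h^-1 *: (e (h *: 1 + t) *: p - e t *: p)) @ 0^' -->
    'D_1 e t *: p.
  have -> : (fun h : R => h^-1 *: (e (h *: 1 + t) *: p - e t *: p)) =
      (fun h => (h^-1 *: (e (h *: 1 + t) - e t)) *: p).
    by apply/funext => h; rewrite -scalerBl scalerA.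
  exact: cvgZr_tmp.
split; [exact: cvgP q_cvg | exact: cvg_lim q_cvg].
Qed.

Lemma is_derive_expR_scale {W : normedModType R} (c t : R) (p : W) :
  is_derive t 1 (fun s => expR (c * s) *: p) (c *: (expR (c * t) *: p)).
Proof.
rewrite scalerA mulrC; apply: is_derive_scaler.
have c_der : is_derive t 1 ( *%R c) c.
  by apply: is_derive_affine_line => h; rewrite /GRing.scale /=; ring.
exact: is_derive1_comp (is_derive_expR _) c_der.
Qed.

Lemma differentiable_fst {U W : normedModType R} (p : U * W) :
  differentiable fst p.
Proof.
have @f : {linear (U * W)%type -> U}.
  by exists (@fst U W); do 2![eexists]; do ?[constructor].
rewrite (_ : fst = f) //; apply/linear_differentiable => x.
exact: cvg_fst.
Qed.

Lemma differentiable_snd {U W : normedModType R} (p : U * W) :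
  differentiable snd p.
Proof.
have @f : {linear (U * W)%type -> W}.
  by exists (@snd U W); do 2![eexists]; do ?[constructor].
rewrite (_ : snd = f) //; apply/linear_differentiable => x.
exact: cvg_snd.
Qed.

End derivatives.

Section standard_primitive.
Context {R : realType} {n : nat}.
Local Notation V := (Cn1 R n).
Implicit Types (p q v w : V).

Lemma differentiable_xcoord j p : differentiable (fun q : V => q.1 ord0 j) p.
Proof.
apply: (@differentiable_comp _ _ _ _ fst (fun N : 'rV[R]_n.+1 => N ord0 j)).
  exact: differentiable_fst.
exact: differentiable_coord.
Qed.

Lemma differentiable_ycoord j p : differentiable (fun q : V => q.2 ord0 j) p.
Proof.
apply: (@differentiable_comp _ _ _ _ snd (fun N : 'rV[R]_n.+1 => N ord0 j)).
  exact: differentiable_snd.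
exact: differentiable_coord.
Qed.

Lemma lambda0DZl (c : R) v w x : lambda0 (c *: v + w) x = c * lambda0 v x + lambda0 w x.
Proof.
rewrite /lambda0 mulrCA -mulrDr; congr (_ * _).
rewrite big_distrr -big_split /=.
by apply: eq_bigr => j _; rewrite !mxE; ring.
Qed.

Lemma lambda0DZr (c : R) v w x : lambda0 x (c *: v + w) = c * lambda0 x v + lambda0 x w.
Proof.
rewrite /lambda0 mulrCA -mulrDr; congr (_ * _).
rewrite big_distrr -big_split /=.
by apply: eq_bigr => j _; rewrite !mxE; ring.
Qed.

Lemma lambda0Zl (c : R) v w : lambda0 (c *: v) w = c * lambda0 v w.
Proof.
rewrite /lambda0 mulrCA; congr (_ * _).
rewrite big_distrr /=.
by apply: eq_bigr => j _; rewrite !mxE; ring.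
Qed.

Lemma lambda0C v w : lambda0 w v = - lambda0 v w.
Proof.
rewrite /lambda0 -mulrN -sumrN; congr (_ * _).
by apply: eq_bigr => j _; ring.
Qed.

Lemma lambda0_J v :
  lambda0 v (- v.2, v.1) = 2^-1 * \sum_(j < n.+1) (v.1 ord0 j ^+ 2 + v.2 ord0 j ^+ 2).
Proof. by congr (_ * _); apply: eq_bigr => j _; rewrite !mxE; ring. Qed.

Lemma is_derive_lambda0 p v w : is_derive p v (fun q => lambda0 q w) (lambda0 v w).
Proof. by apply: is_derive_affine_line => h; rewrite lambda0DZl addrC. Qed.

Lemma differentiable_lambda0 p w : differentiable (fun q => lambda0 q w) p.
Proof.
apply: differentiableM; first exact: differentiable_cst.
rewrite (_ : (fun q : V => _) = \sum_(j < n.+1)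
    (fun q : V => q.1 ord0 j * w.2 ord0 j - q.2 ord0 j * w.1 ord0 j)); last first.
  by apply/funext => q; rewrite fct_sumE.
apply: differentiable_sum => j.
apply: differentiableB; apply: differentiableM; try exact: differentiable_cst.
  exact: differentiable_xcoord.
exact: differentiable_ycoord.
Qed.

Lemma dform_lambda0 p v w : dform (@lambda0 R n) p v w = 2 * lambda0 v w.
Proof.
rewrite /dform; have [_ ->] := is_derive_lambda0 p v w.
have [_ ->] := is_derive_lambda0 p w v.
by rewrite [lambda0 w v]lambda0C opprK mulr_natl mulr2n.
Qed.

Lemma dform_lambda0_liouville p w : dform (@lambda0 R n) p (2^-1 *: p) w = lambda0 p w.
Proof. by rewrite dform_lambda0 lambda0Zl mulVKf ?pnatr_eq0. Qed.

Lemma dform_lambda0_nondegenerate p v :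
  (forall w, dform (@lambda0 R n) p v w = 0) -> v = 0.
Proof.
move=> /(_ (- v.2, v.1)); rewrite dform_lambda0 lambda0_J mulVKf ?pnatr_eq0 //.
move=> /eqP; rewrite psumr_eq0 => [/allP v_eq0|j _]; last by rewrite addr_ge0 ?sqr_ge0.
have coord_eq0 j : v.1 ord0 j = 0 /\ v.2 ord0 j = 0.
  have /= := v_eq0 j (mem_index_enum j).
  by rewrite paddr_eq0 ?sqr_ge0 // !sqrf_eq0 => /andP[/eqP -> /eqP ->].
case: v {v_eq0} coord_eq0 => x y coord_eq0.
by congr pair; apply/rowP => j; rewrite mxE; have [] := coord_eq0 j.
Qed.

End standard_primitive.

Section gauge.
Context {R : realType} {n : nat} {a : 'I_n.+1 -> R}.
Hypothesis a_gt0 : forall j, 0 < a j.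
Local Notation V := (Cn1 R n).
Implicit Types (p q : V).

Lemma sqmod_ge0 p j : 0 <= sqmod p j.
Proof. by rewrite addr_ge0 ?sqr_ge0. Qed.

Lemma sqmodZ (s : R) p j : sqmod (s *: p) j = s ^+ 2 * sqmod p j.
Proof. by rewrite /sqmod !mxE; ring. Qed.

Lemma differentiable_sqmod p j : differentiable (fun q => sqmod q j) p.
Proof.
rewrite (_ : (fun q => _) =
    (fun q => q.1 ord0 j * q.1 ord0 j + q.2 ord0 j * q.2 ord0 j)); last first.
  by apply/funext => q; rewrite /sqmod !expr2.
by apply: differentiableD; apply: differentiableM;
  (exact: differentiable_xcoord || exact: differentiable_ycoord).
Qed.

Lemma ufunZ (s : R) p : ufun a (s *: p) = s ^+ 2 * ufun a p.
Proof. by rewrite /ufun big_distrr /=; apply: eq_bigr => j _; rewrite sqmodZ; ring. Qed.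

Lemma pi_sqmod_ge0 p j : 0 <= pi * sqmod p j.
Proof. by rewrite mulr_ge0 ?pi_ge0 ?sqmod_ge0. Qed.

Lemma differentiable_pi_sqmod p j : differentiable (fun q => pi * sqmod q j) p.
Proof.
by apply: differentiableM; [exact: differentiable_cst | exact: differentiable_sqmod].
Qed.

Lemma ufun_term_ge0 p j : 0 <= pi * sqmod p j / a j.
Proof. by rewrite divr_ge0 ?pi_sqmod_ge0 ?ltW. Qed.

Lemma ufun_ge0 p : 0 <= ufun a p.
Proof. by apply: sumr_ge0 => j _; exact: ufun_term_ge0. Qed.

Lemma ufun_ge_term p (j : 'I_n.+1) : (j < n)%N -> pi * sqmod p j / a j <= ufun a p.
Proof.
move=> j_lt_n; rewrite /ufun (bigD1 j) //= lerDl.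
by apply: sumr_ge0 => i _; exact: ufun_term_ge0.
Qed.

Lemma differentiable_ufun p : differentiable (ufun a) p.
Proof.
rewrite (_ : ufun a = \sum_(j < n.+1)
    (fun q => if (j < n)%N then pi * sqmod q j / a j else 0)); last first.
  by apply/funext => q; rewrite fct_sumE /ufun big_mkcond.
apply: differentiable_sum => j; case: (j < n)%N; last exact: differentiable_cst.
apply: differentiableM; last exact: differentiable_cst.
exact: differentiable_pi_sqmod.
Qed.

End gauge.

Section level_sets.
Context {R : realType} {T : topologicalType}.

Lemma open_lt_continuous (f g : T -> R) :
  continuous f -> continuous g -> open [set x | f x < g x].
Proof.
move=> f_cont g_cont.
rewrite (_ : [set x | f x < g x] = (g - f) @^-1` [set r | 0 < r]).
  apply: open_comp; last exact: open_gt.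
  by move=> x _; exact: continuousB (g_cont x) (f_cont x).
by apply/seteqP; split => x /=; rewrite subr_gt0.
Qed.

Lemma closed_le_continuous (f g : T -> R) :
  continuous f -> continuous g -> closed [set x | f x <= g x].
Proof.
move=> f_cont g_cont.
rewrite (_ : [set x | f x <= g x] = (g - f) @^-1` [set r | 0 <= r]).
  apply: preimage_closed; last exact: closed_ge.
  by move=> x _; exact: continuousB (g_cont x) (f_cont x).
by apply/seteqP; split => x /=; rewrite subr_ge0.
Qed.

End level_sets.

Lemma sqr_le_in_itv {R : realFieldType} (x S : R) :
  0 <= S -> x ^+ 2 <= S -> `[- (1 + S), 1 + S]%classic x.
Proof. by move=> S_ge0 x2_le; rewrite /= in_itv /=; apply/andP; split; nra. Qed.

Definition cube {R : realType} {n : nat} (r : 'I_n -> R) : set 'rV[R]_n :=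
  [set v | forall i, `[- r i, r i]%classic (v ord0 i)].

Lemma cube_compact {R : realType} {n : nat} (r : 'I_n -> R) : compact (cube r).
Proof.
apply: (rV_compact (A := fun i => `[- r i, r i]%classic)) => i.
exact: segment_compact.
Qed.

Section star_shaped.
Context {R : realType} {W : normedModType R}.

Lemma star_shaped_flow {U : set W} {c : R} {p : W} :
  open U -> (forall s q, 0 < s -> s <= 1 -> U q -> U (s *: q)) -> 0 < c -> U p ->
  exists2 d : R, 0 < d & forall t, t < d -> U (expR (c * t) *: p).
Proof.
move=> U_open U_star c_gt0 Up.
have flow_cont : {for 0, continuous (fun t : R => expR (c * t) *: p)}.
  apply/differentiable_continuous/derivable1_diffP.
  by have [] := is_derive_expR_scale c 0 p.
have : nbhs (expR (c * 0) *: p) U.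
  by rewrite mulr0 expR0 scale1r; exact: open_nbhs_nbhs.
move=> /flow_cont /nbhs_ballP[d d_gt0 ball_flowU].
exists d => // t t_lt_d; have [t_le0 | t_gt0] := leP t 0.
  by apply: U_star => //; rewrite ?expR_gt0 // expR_le1 pmulr_rle0.
by apply: ball_flowU; rewrite /ball /= sub0r normrN gtr0_norm.
Qed.

End star_shaped.

Section ellipsoid_domain.
Context {R : realType} {n : nat} {a : 'I_n.+1 -> R} {eps beta : R}.
Hypotheses (a_gt0 : forall j, 0 < a j) (eps_gt0 : 0 < eps).
Local Notation V := (Cn1 R n).
Local Notation u := (ufun a).
Local Notation A := (a ord_max).
Local Notation P q := (pi * sqmod q ord_max).
Implicit Types (p q : V).

Lemma differentiable_affine_ufun (c d e : R) q :
  differentiable (fun q => c * (d + e * u q)) q.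
Proof.
apply: differentiableM; first exact: differentiable_cst.
apply: differentiableD; first exact: differentiable_cst.
by apply: differentiableM; [exact: differentiable_cst | exact: differentiable_ufun].
Qed.

(* The constraint [u <= 1] of the ellipsoid follows from [P < A (1 - u)]; that
   bound is written [1 + (-1) * u] to match [differentiable_affine_ufun]. *)
Lemma EHE : EH a eps beta =
  [set q | P q < A * (eps + beta * u q) /\ P q < A * (1 + (-1) * u q)].
Proof.
apply/seteqP; split => q; rewrite /EH /Hfun /= mulN1r lt_min.
  by move=> [_ /andP].
move=> [lt_eps lt_one]; rewrite lt_eps lt_one; split => //.
have := le_lt_trans (pi_sqmod_ge0 q _) lt_one; rewrite pmulr_rgt0 // subr_gt0.
exact: ltW.
Qed.

Lemma EH_open : open (EH a eps beta).
Proof.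
rewrite EHE; apply: openI; apply: open_lt_continuous => q;
  apply: differentiable_continuous;
  (exact: differentiable_pi_sqmod || exact: differentiable_affine_ufun).
Qed.

Lemma EH_scale (s : R) p :
  0 < s -> s <= 1 -> EH a eps beta p -> EH a eps beta (s *: p).
Proof.
rewrite EHE /= sqmodZ ufunZ mulrCA => s_gt0 s_le1 [lt_eps lt_one].
have k_gt0 : 0 < s ^+ 2 by rewrite exprn_gt0.
have k_le1 : s ^+ 2 <= 1 by rewrite expr_le1 // ltW.
have A_gt0 := a_gt0 ord_max.
move: (s ^+ 2) (u p) (P p) k_gt0 k_le1 lt_eps lt_one => k w z k_gt0 k_le1.
rewrite -(ltr_pM2l k_gt0) => lt_eps; rewrite -(ltr_pM2l k_gt0) => lt_one.
have gap_eps : 0 <= A * eps * (1 - k) by rewrite mulr_ge0 ?subr_ge0 // ltW ?mulr_gt0.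
have gap_one : 0 <= A * (1 - k) by rewrite mulr_ge0 ?subr_ge0 // ltW.
split; nra.
Qed.

(* For [k = s ^+ 2] this set contains [s] times the closure of [EH]. *)
Definition EH_le (k : R) : set V :=
  [set q | P q <= A * (eps * k + beta * u q) /\ P q <= A * (k + (-1) * u q)].

Lemma EH_le_closed k : closed (EH_le k).
Proof.
apply: closedI; apply: closed_le_continuous => q;
  apply: differentiable_continuous;
  (exact: differentiable_pi_sqmod || exact: differentiable_affine_ufun).
Qed.

Lemma scale_EH_sub_EH_le (s : R) p : EH a eps beta p -> EH_le (s ^+ 2) (s *: p).
Proof.
rewrite EHE /EH_le /= sqmodZ ufunZ mulrCA => -[lt_eps lt_one].
have k_ge0 : 0 <= s ^+ 2 by rewrite sqr_ge0.
move: (s ^+ 2) (u p) (P p) k_ge0 lt_eps lt_one => k w z k_ge0 /ltW lt_eps /ltW lt_one.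
have := ler_wpM2l k_ge0 lt_eps; have := ler_wpM2l k_ge0 lt_one.
split; nra.
Qed.

Lemma EH_le_sub_EH k : k < 1 -> EH_le k `<=` EH a eps beta.
Proof.
move=> k_lt1 q [le_eps le_one]; rewrite EHE; have A_gt0 := a_gt0 ord_max.
split; [apply: le_lt_trans le_eps _ | apply: le_lt_trans le_one _];
  rewrite ltr_pM2l // ltrD2r //.
by rewrite gtr_pMr.
Qed.

Lemma EH_le_sqmod_le k q j : k <= 1 -> EH_le k q -> pi * sqmod q j <= a j.
Proof.
move=> k_le1 [_ le_one]; have A_gt0 := a_gt0 ord_max.
have u_le_k : u q <= k.
  by have := le_trans (pi_sqmod_ge0 q _) le_one; rewrite pmulr_rge0 // mulN1r subr_ge0.
have [j_lt_n | j_ge_n] := ltnP j n.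
  have := le_trans (ufun_ge_term a_gt0 q j j_lt_n) (le_trans u_le_k k_le1).
  by rewrite ler_pdivrMr // mul1r.
have -> : j = ord_max.
  by apply/val_inj/eqP; rewrite /= eqn_leq j_ge_n -ltnS ltn_ord.
apply: le_trans le_one _; rewrite ger_pMr // mulN1r lerBlDr.
by apply: le_trans k_le1 _; rewrite lerDl (ufun_ge0 a_gt0).
Qed.

Lemma EH_le_sub_box k : k <= 1 ->
  EH_le k `<=` cube (fun j => 1 + a j / pi) `*` cube (fun j => 1 + a j / pi).
Proof.
move=> k_le1 q q_in; have pi_gt0 : 0 < pi :> R := pi_gt0 R.
have sqmod_le j : sqmod q j <= a j / pi.
  by rewrite ler_pdivlMr // mulrC; exact: EH_le_sqmod_le q_in.
have bound_ge0 j : 0 <= a j / pi by rewrite divr_ge0 // ltW.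
split => i /=; apply: sqr_le_in_itv => //; apply: le_trans (sqmod_le i).
  by rewrite lerDl sqr_ge0.
by rewrite lerDr sqr_ge0.
Qed.

Lemma closure_scale_EH (s : R) : 0 < s -> s < 1 ->
  compact (closure ((fun p => s *: p) @` EH a eps beta)) /\
  closure ((fun p => s *: p) @` EH a eps beta) `<=` EH a eps beta.
Proof.
move=> s_gt0 s_lt1; have k_lt1 : s ^+ 2 < 1 by rewrite expr_lt1 // ltW.
have closure_sub : closure ((fun p => s *: p) @` EH a eps beta) `<=` EH_le (s ^+ 2).
  rewrite closureE; apply: smallest_sub; first exact: EH_le_closed.
  by move=> _ [p EHp <-]; exact: scale_EH_sub_EH_le.
split; last by apply: (subset_trans closure_sub); exact: EH_le_sub_EH.
pose r j := 1 + a j / pi.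
apply: (@subclosed_compact _ _ (cube r `*` cube r)).
- exact: closed_closure.
- exact: compact_setX (cube_compact r) (cube_compact r).
by apply: (subset_trans closure_sub); exact: EH_le_sub_box (ltW k_lt1).
Qed.

End ellipsoid_domain.

Theorem proposition5p1 (R : realType) (n : nat) (a : 'I_n.+1 -> R) (eps beta : R) :
  (forall j, 0 < a j) -> 0 < eps -> eps < 1 -> 1 < beta ->
  open_liouville_domain (EH a eps beta) (@lambda0 R n).
Proof.
move=> a_gt0 eps_gt0 _ _.
have half_gt0 : 0 < 2^-1 :> R by rewrite invr_gt0.
split.
- exact: EH_open.
- by move=> p _ c v w; exact: lambda0DZr.
- by move=> p _ w; exact: differentiable_lambda0.
- by move=> p _ v; exact: dform_lambda0_nondegenerate.
exists (fun p => 2^-1 *: p); split; first by move=> p _ w; exact: dform_lambda0_liouville.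
exists (fun t p => expR (2^-1 * t) *: p); split.
  move=> p EHp; split; first by rewrite mulr0 expR0 scale1r.
  have [d d_gt0 flowEH] := star_shaped_flow (EH_open a_gt0) (EH_scale a_gt0 eps_gt0)
    half_gt0 EHp.
  by exists d => // t /flowEH EHt; split => //; exact: is_derive_expR_scale.
move=> t t_lt0; apply: closure_scale_EH => //; first exact: expR_gt0.
by rewrite expR_lt1 pmulr_rlt0.
Qed.
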